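(* Let $M$ be a strongly regular sequence, $\Omega\subset\mathbb{R}^n$ open, and let $\varphi$ be a non-zero element of $\mathcal{C}_M(\Omega)$ with zero set $X$. Assume that $\varphi$ satisfies the $\mathcal{C}_M$ Łojasiewicz condition, and let $X_\infty=\{a\in X : T_a\varphi=0\}$ be the set of points of flatness of $\varphi$. Then $X\setminus X_\infty$ is dense in the boundary $\partial X$ of $X$.
   Context: Multi-index notation: $J=(j_1,\dots,j_n)$, $j=j_1+\dots+j_n$, $J!=j_1!\cdots j_n!$, $D^J=\partial^j/\partial x_1^{j_1}\cdots\partial x_n^{j_n}$. $T_a\varphi=\sum_J \frac{1}{J!}D^J\varphi(a)x^J$ is the formal Taylor series at $a$. A sequence $M=(M_j)_{j\ge0}$ of reals is strongly regular if: $M$ is increasing with $M_0=1$; $M_{j+1}/M_j$ is increasing; there is $A>0$ with $M_{j+k}\le A^{j+k}M_jM_k$ for all $j,k$; and there is $A>0$ with $\sum_{j\ge k}\frac{M_j}{(j+1)M_{j+1}}\le A\frac{M_k}{M_{k+1}}$ for all $k$. $h_M(t)=\inf_{j\ge0}t^jM_j$ for $t>0$, $h_M(0)=0$. $\mathcal{C}_M(\Omega)$ is the space of $f\in\mathcal{C}^\infty(\Omega)$ such that for every compact $K\subset\Omega$ there are $C,\sigma>0$ with $\vert D^Jf(x)\vert\le C\sigma^j j!M_j$ for all $J$, $x\in K$. A non-zero $\varphi\in\mathcal{C}_M(\Omega)$ with zero set $X$ satisfies the $\mathcal{C}_M$ Łojasiewicz condition if for every compact $K\subset\Omega$ and every real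 $\lambda>0$ there exist $C,\sigma>0$ such that for all $J\in\mathbb{N}^n$ and all $x\in K\setminus X$, $\vert D^J(1/\varphi)(x)\vert\le \dfrac{C\sigma^j j!M_j}{h_M(\lambda\,\mathrm{dist}(x,X))}$. *)

From HB Require Import structures.
From mathcomp Require Import all_boot all_order all_algebra.
From mathcomp Require Import all_classical all_reals all_analysis.
Set Implicit Arguments. Unset Strict Implicit. Unset Printing Implicit Defensive.
Import Order.TTheory GRing.Theory Num.Theory.
Import numFieldNormedType.Exports.
Local Open Scope classical_set_scope.
Local Open Scope ring_scope.

Section Defs.
Variables (R : realType) (n : nat).
Notation V := 'rV[R]_n.

Definition evec (i : 'I_n) : V := delta_mx 0 i.

Definition partial (i : 'I_n) (f : V -> R) : V -> R :=
  fun x => 'D_(evec i) f x.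

Definition Dseq (s : seq 'I_n) (f : V -> R) : V -> R :=
  foldr partial f s.

Definition mindex := 'I_n -> nat.
Definition mdeg (J : mindex) : nat := (\sum_(i < n) J i)%N.
Definition mfact (J : mindex) : nat := (\prod_(i < n) (J i)`!)%N.

Definition DJ (J : mindex) (f : V -> R) : V -> R :=
  foldr (fun i g => iter (J i) (partial i) g) f (enum 'I_n).

Definition smooth_on (Omega : set V) (f : V -> R) : Prop :=
  forall (s : seq 'I_n) (x : V), Omega x ->
    (forall i : 'I_n, derivable (Dseq s f) x (evec i)) /\
    {for x, continuous (Dseq s f)}.

(** formal Taylor series of f at a, as its family of coefficients *)
Definition taylor (f : V -> R) (a : V) : mindex -> R :=
  fun J => DJ J f a / (mfact J)%:R.

Definition enorm (x : V) : R := Num.sqrt (\sum_(i < n) x ord0 i ^+ 2).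
Definition dist_set (x : V) (X : set V) : R :=
  inf [set enorm (x - y) | y in X].

Definition zero_set (Omega : set V) (phi : V -> R) : set V :=
  [set x | Omega x /\ phi x = 0].

Definition flat_points (Omega : set V) (phi : V -> R) : set V :=
  [set a | zero_set Omega phi a /\ taylor phi a = (fun _ => 0)].

Definition rel_boundary (Omega X : set V) : set V :=
  Omega `&` closure X `&` closure (Omega `\` X).
End Defs.

Section Seq.
Variable R : realType.

Definition strongly_regular (M : nat -> R) : Prop :=
  [/\ (forall j, M j <= M j.+1) /\ M 0%N = 1,
      (forall j, M j.+1 / M j <= M j.+2 / M j.+1),
      (exists2 A : R, 0 < A & forall j k : nat,
          M (j + k)%N <= A ^+ (j + k) * M j * M k) &
      (exists2 A : R, 0 < A & forall k : nat,
          (\sum_(k <= j <oo) ((M j / ((j.+1)%:R * M j.+1))%:E)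
             <= (A * (M k / M k.+1))%:E)%E)].

Definition hM (M : nat -> R) (t : R) : R :=
  if t == 0 then 0 else inf [set t ^+ j * M j | j in [set: nat]].
End Seq.

Section Classes.
Variables (R : realType) (n : nat).
Notation V := 'rV[R]_n.

Definition CM (M : nat -> R) (Omega : set V) (f : V -> R) : Prop :=
  smooth_on Omega f /\
  forall K : set V, compact K -> K `<=` Omega ->
    exists C sigma : R, [/\ 0 < C, 0 < sigma &
      forall (J : mindex n) (x : V), K x ->
        `|DJ J f x| <= C * sigma ^+ mdeg J * (mdeg J)`!%:R * M (mdeg J)].

Definition CM_lojasiewicz (M : nat -> R) (Omega : set V) (phi : V -> R) : Prop :=
  forall K : set V, compact K -> K `<=` Omega ->
  forall lambda : R, 0 < lambda ->
    exists C sigma : R, [/\ 0 < C, 0 < sigma &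
      forall (J : mindex n) (x : V), K x -> ~ zero_set Omega phi x ->
        `|DJ J (fun y => (phi y)^-1) x|
          <= C * sigma ^+ mdeg J * (mdeg J)`!%:R * M (mdeg J)
             / hM M (lambda * dist_set x (zero_set Omega phi))].
End Classes.

From HB Require Import structures.
From mathcomp Require Import all_boot all_order all_algebra.
From mathcomp Require Import all_classical all_reals all_analysis.
From mathcomp Require Import lra ring.
Import Order.TTheory GRing.Theory Num.Theory.
Import numFieldNormedType.Exports.
Local Open Scope classical_set_scope.
Local Open Scope ring_scope.
Set Implicit Arguments. Unset Strict Implicit. Unset Printing Implicit Defensive.

(* Let [a] be a boundary point of the zero set [X] and assume, for a contradiction,
   that all zeros of [phi] in a box around [a] are flat. Take [x] near [a] with
   [phi x <> 0] and let [d] be its distance to [X]; [d] is attained up to a factor 2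
   at a flat zero [b]. Taylor's inequality at [b], applied coordinate by coordinate
   to all orders, gives [|phi x| <= C * h_M(s)] with [s] proportional to [d], while
   the Lojasiewicz inequality at order 0 gives [h_M(2 s) <= C' * |phi x|]. Hence
   [h_M(2 s) <= C C' h_M(s)], which is impossible for small [s]: as [M] is increasing
   with [M 0 = 1], [h_M(2 s) >= 2 ^ N * h_M(s)] as soon as [2 ^ N s M_N <= 1]. *)

Section OneVariableTaylor.
Variable R : realType.

Definition taylor_poly (c : nat -> R) (r : nat) (u : R) : R :=
  \sum_(a < r.+1) c a * u ^+ a / a`!%:R.

Lemma taylor_poly0 (c : nat -> R) (r : nat) : taylor_poly c r 0 = c 0%N.
Proof.
rewrite /taylor_poly big_ord_recl expr0 mulr1 fact0 divr1 big1 ?addr0 // => a _.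
by rewrite expr0n /= mulr0 mul0r.
Qed.

Lemma taylor_poly_le (c : nat -> R) (r : nat) (u v : R) :
  (forall a, 0 <= c a) -> 0 <= u <= v -> taylor_poly c r u <= taylor_poly c r v.
Proof.
move=> c0 /andP[u0 uv]; apply: ler_sum => a _.
apply: ler_wpM2r; first by rewrite invr_ge0 ler0n.
by apply: ler_wpM2l => //; apply: lerXn2r; rewrite ?nnegrE // (le_trans u0).
Qed.

Lemma taylor_poly_binomial (C u v : R) (r : nat) :
  taylor_poly (fun a => C * u ^+ (r - a) / (r - a)`!%:R) r v = C * (u + v) ^+ r / r`!%:R.
Proof.
rewrite -mulrA exprDn mulr_suml mulr_sumr; apply: eq_bigr => a _.
have ar : (a <= r)%N by rewrite -ltnS.
have /(congr1 (fun m => m%:R : R)) := bin_fact ar; rewrite !natrM => E.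
have fa : (a`!%:R : R) != 0 by rewrite pnatr_eq0 -lt0n fact_gt0.
have fra : ((r - a)`!%:R : R) != 0 by rewrite pnatr_eq0 -lt0n fact_gt0.
have fr : (r`!%:R : R) != 0 by rewrite pnatr_eq0 -lt0n fact_gt0.
have bin : ('C(r, a)%:R : R) != 0 by rewrite pnatr_eq0 -lt0n bin_gt0.
by rewrite -mulr_natr -E; field; rewrite fa fra bin.
Qed.

Lemma is_derive_monomial (c u : R) (a : nat) :
  is_derive u 1 (fun v => c * v ^+ a.+1 / (a.+1)`!%:R) (c * u ^+ a / a`!%:R).
Proof.
have D := is_deriveZ (c / (a.+1)`!%:R) (is_deriveX a.+1 (is_derive_id u 1)).
have -> : (fun v => c * v ^+ a.+1 / (a.+1)`!%:R) =
          (c / (a.+1)`!%:R) \*: (@idfun R ^+ a.+1).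
  apply/funext => v /=; rewrite /GRing.scale /= mulrAC; congr (_ * _).
  by elim: a.+1 => [|k IH] //; rewrite [in LHS]exprS IH [in RHS]exprS.
apply: is_derive_eq; rewrite /= /GRing.scale /= mulr1 factS natrM.
have fa : (a`!%:R : R) != 0 by rewrite pnatr_eq0 -lt0n fact_gt0.
have a1 : (1 + a%:R : R) != 0 by rewrite addrC natr1 pnatr_eq0.
by field; rewrite fa a1.
Qed.

Lemma is_derive_taylor_poly (c : nat -> R) (r : nat) (u : R) :
  is_derive u 1 (taylor_poly c r.+1) (taylor_poly (fun a => c a.+1) r u).
Proof.
have -> : taylor_poly c r.+1 = cst (c 0%N) +
    \sum_(a < r.+1) (fun v => c a.+1 * v ^+ a.+1 / (a.+1)`!%:R).
  apply/funext => v; rewrite /taylor_poly big_ord_recl /= fct_sumE.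
  by rewrite expr0 mulr1 fact0 divr1.
have Dsum := is_derive_sum (fun a : 'I_r.+1 => is_derive_monomial (c a.+1) u a).
apply: is_derive_eq; rewrite add0r /taylor_poly.
by apply: eq_bigr.
Qed.

Lemma is_derive_ge0_le (f f' : R -> R) (a b : R) : a <= b ->
  (forall u, a <= u <= b -> is_derive u 1 f (f' u)) ->
  (forall u, a <= u <= b -> 0 <= f' u) -> f a <= f b.
Proof.
move=> ab Df f'0; have ab' u : u \in `]a, b[ -> a <= u <= b.
  by rewrite in_itv /= => /andP[au ub]; rewrite !ltW.
apply: (@ger0_derive1_ndecr _ f a b) => //.
- by move=> u /ab' /Df Du.
- by move=> u /ab' uab; have Du := Df u uab; rewrite derive1E derive_val f'0.
- by apply: derivable_within_continuous => u; rewrite in_itv /= => /Df Du.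
Qed.

Lemma abs_sub_le_is_derive (f F f' F' : R -> R) (a b : R) : a <= b ->
  (forall u, a <= u <= b -> is_derive u 1 f (f' u)) ->
  (forall u, a <= u <= b -> is_derive u 1 F (F' u)) ->
  (forall u, a <= u <= b -> `|f' u| <= F' u) ->
  `|f b - f a| <= F b - F a.
Proof.
move=> ab Df DF f'F.
have Fsubf : F a - f a <= F b - f b.
  apply: (is_derive_ge0_le (f := F - f) (f' := fun u => F' u - f' u)) => // u uab.
  - by have := is_deriveB (DF u uab) (Df u uab).
  - by have := f'F u uab; rewrite ler_norml subr_ge0 => /andP[].
have Faddf : F a + f a <= F b + f b.
  apply: (is_derive_ge0_le (f := F + f) (f' := fun u => F' u + f' u)) => // u uab.
  - by have := is_deriveD (DF u uab) (Df u uab).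
  - by have := f'F u uab; rewrite ler_norml -subr_ge0 opprK addrC => /andP[].
by rewrite ler_norml; apply/andP; split; lra.
Qed.

Lemma taylor_poly_bound (r : nat) (g : nat -> R -> R) (c : nat -> R) (T : R) :
  0 <= T ->
  (forall a s, (a < r)%N -> 0 <= s <= T -> is_derive s 1 (g a) (g a.+1 s)) ->
  (forall a, (a < r)%N -> `|g a 0| <= c a) ->
  (forall s, 0 <= s <= T -> `|g r s| <= c r) ->
  `|g 0%N T| <= taylor_poly c r T.
Proof.
elim: r g c T => [|r IH] g c T T0 Dg g0c grc.
  by rewrite /taylor_poly big_ord1 expr0 mulr1 divr1; apply: grc; rewrite T0 lexx.
have g1_bound u : 0 <= u <= T ->
    `|g 1%N u| <= taylor_poly (fun a => c a.+1) r u.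
  move=> /andP[u0 uT]; apply: (IH (fun a => g a.+1)) => //.
  - by move=> a s ar /andP[s0 su]; apply: Dg; rewrite // s0 (le_trans su uT).
  - by move=> a ar; apply: g0c.
  - by move=> s /andP[s0 su]; apply: grc; rewrite s0 (le_trans su uT).
have := abs_sub_le_is_derive T0 (fun u uT => Dg 0%N u (ltn0Sn r) uT)
  (fun u _ => is_derive_taylor_poly c r u) g1_bound.
rewrite taylor_poly0; have := g0c 0%N (ltn0Sn r).
have := ler_normD (g 0%N T - g 0%N 0) (g 0%N 0); rewrite subrK; lra.
Qed.

Lemma taylor_poly_bound_abs (r : nat) (g : nat -> R -> R) (c : nat -> R) (t : R) :
  (forall a s, (a < r)%N -> Num.min 0 t <= s <= Num.max 0 t ->
     is_derive s 1 (g a) (g a.+1 s)) ->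
  (forall a, (a < r)%N -> `|g a 0| <= c a) ->
  (forall s, Num.min 0 t <= s <= Num.max 0 t -> `|g r s| <= c r) ->
  `|g 0%N t| <= taylor_poly c r `|t|.
Proof.
move=> Dg g0c grc; have [t0|t0] := leP 0 t.
  have seg s : 0 <= s <= t -> Num.min 0 t <= s <= Num.max 0 t.
    by rewrite (min_idPl t0) (max_idPr t0).
  rewrite (ger0_norm t0); apply: taylor_poly_bound => // [a s ar /seg|s /seg].
    exact: Dg.
  exact: grc.
have seg s : 0 <= s <= - t -> Num.min 0 t <= - s <= Num.max 0 t.
  rewrite (min_idPr (ltW t0)) (max_idPl (ltW t0)) => /andP[? ?]; lra.
pose h a s := (-1) ^+ a * g a (- s).
have normh a s : `|h a s| = `|g a (- s)|.
  by rewrite normrM normrX normrN1 expr1n mul1r.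
have := @taylor_poly_bound r h c (- t); rewrite normh opprK (ltr0_norm t0).
apply=> [|a s ar /seg st|a ar|s /seg st]; rewrite ?normh ?oppr0; first lra.
- have Dgs := is_derive1_comp (Dg a (- s) ar st) (is_deriveNid s 1).
  apply: is_derive_eq; rewrite /GRing.scale /= /h exprS; lra.
- exact: g0c.
- exact: grc.
Qed.

End OneVariableTaylor.

Section MultiIndex.
Variables (R : realType) (n : nat).
Implicit Types (J : mindex n) (i : 'I_n) (a : nat) (f : 'rV[R]_n -> R).

Lemma is_derive_partial f (p : 'rV[R]_n) (i : 'I_n) (s : R) :
  derivable f (p + s *: evec R i) (evec R i) ->
  is_derive s 1 (fun s => f (p + s *: evec R i)) (partial i f (p + s *: evec R i)).
Proof.
move=> df.
have E : (fun h : R => h^-1 *: (((fun s => f (p + s *: evec R i)) \o shift s) (h *: 1)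
                                 - f (p + s *: evec R i)))
  = (fun h : R => h^-1 *: ((f \o shift (p + s *: evec R i)) (h *: evec R i)
                           - f (p + s *: evec R i))).
  apply/funext => h /=; congr (_ *: (f _ - _)).
  by rewrite [h%:A]mulr1 scalerDl addrCA.
apply: DeriveDef; first by rewrite /derivable E.
by rewrite /partial /derive E.
Qed.

Lemma DJ0 f : DJ (fun _ => 0%N) f = f.
Proof. by rewrite /DJ; elim: (enum 'I_n) => //= l e ->. Qed.

Lemma mdeg0 : mdeg (fun _ : 'I_n => 0%N) = 0%N.
Proof. by rewrite /mdeg big1. Qed.

Lemma DJ_Dseq J f : exists s, DJ J f = Dseq s f.
Proof.
rewrite /DJ /Dseq; elim: (enum 'I_n) => [|l e [s IH]] /=; first by exists [::].
exists (nseq (J l) l ++ s); rewrite foldr_cat IH.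
by elim: (J l) => [|k IHk] //=; rewrite IHk.
Qed.

Definition mset J (i : 'I_n) (a : nat) : mindex n :=
  fun l => if l == i then a else J l.

Lemma mdeg_mset J i a : J i = 0%N -> mdeg (mset J i a) = (mdeg J + a)%N.
Proof.
move=> Ji; rewrite /mdeg (bigD1 i) //= [in RHS](bigD1 i) //= Ji /mset eqxx add0n addnC.
by congr (_ + _)%N; apply: eq_bigr => l /negbTE ->.
Qed.

Lemma foldr_iter_mset J i a f (s : seq 'I_n) :
  (forall l : 'I_n, (l <= i)%N -> J l = 0%N) -> sorted (relpre val ltn) s ->
  foldr (fun l g => iter (mset J i a l) (partial l) g) f s =
  if i \in s then iter a (partial i) (foldr (fun l g => iter (J l) (partial l) g) f s)
  else foldr (fun l g => iter (J l) (partial l) g) f s.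
Proof.
move=> J0; elim: s => [|l s IH] //=.
have lt_trans : transitive (relpre (@nat_of_ord n) ltn) by move=> ? ? ?; exact: ltn_trans.
rewrite (path_sortedE lt_trans) in_cons => /andP[/allP lt_s s_sorted]; rewrite IH //.
have [li|il|/val_inj li] := ltngtP l i.
- have lNi : l != i by apply/eqP=> E; move: li; rewrite E ltnn.
  by rewrite /mset (negbTE lNi) eq_sym (negbTE lNi) J0 // ltnW.
- have iNs : i \notin s by apply/negP => /lt_s /=; rewrite ltnNge ltnW.
  have lNi : l != i by apply/eqP=> E; move: il; rewrite E ltnn.
  by rewrite /mset (negbTE lNi) eq_sym (negbTE lNi) (negbTE iNs).
- subst l; have iNs : i \notin s by apply/negP => /lt_s /=; rewrite ltnn.
  by rewrite (negbTE iNs) eqxx /= /mset eqxx J0.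
Qed.

Lemma DJ_mset J i a f : (forall l : 'I_n, (l <= i)%N -> J l = 0%N) ->
  DJ (mset J i a) f = iter a (partial i) (DJ J f).
Proof.
move=> J0; rewrite /DJ foldr_iter_mset // ?mem_enum //.
by have := iota_ltn_sorted 0 n; rewrite -val_enum_ord sorted_map.
Qed.

Lemma is_derive_DJ_mset (Omega : set 'rV[R]_n) J i a f (p : 'rV[R]_n) (s : R) :
  smooth_on Omega f -> Omega (p + s *: evec R i) ->
  (forall l : 'I_n, (l <= i)%N -> J l = 0%N) ->
  is_derive s 1 (fun s => DJ (mset J i a) f (p + s *: evec R i))
    (DJ (mset J i a.+1) f (p + s *: evec R i)).
Proof.
move=> f_smooth Op J0; rewrite !DJ_mset // iterS.
apply: is_derive_partial; rewrite -DJ_mset //.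
have [sq ->] := DJ_Dseq (mset J i a) f.
exact: (f_smooth sq _ Op).1 i.
Qed.

End MultiIndex.

Section Staircase.
Variables (R : realType) (n : nat).
Implicit Types (b x v : 'rV[R]_n).

Definition rect b x : set 'rV[R]_n :=
  [set v | forall l, Num.min (b ord0 l) (x ord0 l) <= v ord0 l <= Num.max (b ord0 l) (x ord0 l)].

Definition stair b x (m : nat) : 'rV[R]_n :=
  \row_l (if (l < m)%N then x ord0 l else b ord0 l).

Lemma stair0 b x : stair b x 0 = b.
Proof. by apply/rowP => l; rewrite mxE. Qed.

Lemma stairn b x : stair b x n = x.
Proof. by apply/rowP => l; rewrite mxE ltn_ord. Qed.

Lemma stair_evec b x (i : 'I_n) (s : R) (l : 'I_n) :
  (stair b x i + s *: evec R i) ord0 l =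
  if (l < i)%N then x ord0 l else if l == i then b ord0 l + s else b ord0 l.
Proof.
rewrite !mxE eqxx /=; case: ifP => [li|_].
  have /negbTE-> : l != i by apply/eqP=> E; move: li; rewrite E ltnn.
  by rewrite mulr0 addr0.
by case: eqP => _; rewrite ?mulr1 ?mulr0 ?addr0.
Qed.

Lemma stairS b x (i : 'I_n) :
  stair b x i.+1 = stair b x i + (x ord0 i - b ord0 i) *: evec R i.
Proof.
apply/rowP => l; rewrite stair_evec mxE ltnS leq_eqVlt.
case: (ltnP l i) => li; first by rewrite orbT.
rewrite orbF; case: eqP => [/val_inj ->|NE]; first by rewrite eqxx addrCA subrr addr0.
by rewrite ifN_eq //; apply/eqP=> E; apply: NE; rewrite E.
Qed.

Lemma stair_evec_rect b x (i : 'I_n) (s : R) :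
  Num.min 0 (x ord0 i - b ord0 i) <= s <= Num.max 0 (x ord0 i - b ord0 i) ->
  rect b x (stair b x i + s *: evec R i).
Proof.
move=> si l; rewrite stair_evec.
have rect_b : Num.min (b ord0 l) (x ord0 l) <= b ord0 l <= Num.max (b ord0 l) (x ord0 l).
  by rewrite ge_min le_max lexx.
case: ifP => _; first by rewrite ge_min le_max lexx !orbT.
case: eqP => [->|_] //; move: si; rewrite /Num.min /Num.max.
by case: ltP => ?; case: ltP => ? /andP[? ?]; apply/andP; split; lra.
Qed.

End Staircase.

Section FlatTaylor.
Variables (R : realType) (n : nat) (Omega K : set 'rV[R]_n) (phi : 'rV[R]_n -> R).
Hypotheses (phi_smooth : smooth_on Omega phi) (KO : K `<=` Omega).
Variables (b x : 'rV[R]_n) (k : nat) (Ck D : R).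
Hypotheses (rectK : rect b x `<=` K) (Ck0 : 0 <= Ck) (D0 : 0 <= D).
Hypothesis DJk_bound : forall (J : mindex n) y, K y -> mdeg J = k -> `|DJ J phi y| <= Ck.
Hypothesis flat_b : forall J : mindex n, DJ J phi b = 0.
Hypothesis xbD : forall l, `|x ord0 l - b ord0 l| <= D.

(* Walk from [b] to [x] one coordinate at a time; at step [m], Taylor's inequality
   in the [m]-th variable is applied to every derivative [DJ J phi] with [J] supported
   on the variables [>= m], the lower-order coefficients being bounded inductively. *)
Lemma DJ_stair_bound (m : nat) (J : mindex n) : (m <= n)%N ->
  (forall l : 'I_n, (l < m)%N -> J l = 0%N) -> (mdeg J <= k)%N ->
  `|DJ J phi (stair b x m)| <= Ck * (m%:R * D) ^+ (k - mdeg J) / (k - mdeg J)`!%:R.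
Proof.
elim: m J => [|m IH] J mn J0 Jk.
  by rewrite stair0 flat_b normr0 mul0r divr_ge0 ?mulr_ge0 ?exprn_ge0 ?ler0n.
pose i := Ordinal mn; have im : val i = m by [].
have Ji0 (l : 'I_n) : (l <= i)%N -> J l = 0%N by move=> li; apply: J0; rewrite ltnS.
set r := (k - mdeg J)%N; set t := x ord0 i - b ord0 i.
pose g a s := DJ (mset J i a) phi (stair b x i + s *: evec R i).
pose c a := Ck * (m%:R * D) ^+ (r - a) / (r - a)`!%:R.
have seg_K s : Num.min 0 t <= s <= Num.max 0 t -> K (stair b x i + s *: evec R i).
  by move/stair_evec_rect; exact: rectK.
have Dg a s : (a < r)%N -> Num.min 0 t <= s <= Num.max 0 t ->
    is_derive s 1 (g a) (g a.+1 s).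
  by move=> _ /seg_K /KO Os; apply: is_derive_DJ_mset phi_smooth Os Ji0.
have g0c a : (a < r)%N -> `|g a 0| <= c a.
  move=> ar; rewrite /g scale0r addr0 /c.
  have -> : (r - a = k - mdeg (mset J i a))%N by rewrite mdeg_mset ?Ji0 // subnDA.
  apply: IH; first exact: ltnW.
    move=> l lm; rewrite /mset ifN_eq; first by apply: J0; rewrite ltnS ltnW.
    by apply/eqP=> E; move: lm; rewrite E im ltnn.
  by rewrite mdeg_mset ?Ji0 // -leq_subRL // ltnW.
have grc s : Num.min 0 t <= s <= Num.max 0 t -> `|g r s| <= c r.
  move=> /seg_K Ks; rewrite /c subnn expr0 mulr1 fact0 divr1.
  by apply: DJk_bound => //; rewrite mdeg_mset ?Ji0 // subnKC.
have := taylor_poly_bound_abs Dg g0c grc.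
have -> : g 0%N t = DJ J phi (stair b x m.+1).
  rewrite /g -im stairS; congr (DJ _ _ _).
  by apply/funext => l; rewrite /mset; case: eqP => // ->; rewrite Ji0.
move/le_trans; apply; rewrite -[m.+1]addn1 natrD mulrDl mul1r.
rewrite -taylor_poly_binomial; apply: taylor_poly_le.
  by move=> a; rewrite /c !mulr_ge0 ?invr_ge0 ?ler0n ?exprn_ge0 ?mulr_ge0 ?ler0n.
by rewrite normr_ge0 xbD.
Qed.

Lemma flat_taylor_bound : `|phi x| <= Ck * (n%:R * D) ^+ k / k`!%:R.
Proof.
have := @DJ_stair_bound n (fun _ => 0%N) (leqnn n) (fun _ _ => erefl).
by rewrite DJ0 mdeg0 subn0 stairn; apply.
Qed.

End FlatTaylor.

Section Geometry.
Variables (R : realType) (n : nat).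
Implicit Types (a b x y v : 'rV[R]_n) (X : set 'rV[R]_n).

Definition box a (r : R) : set 'rV[R]_n :=
  [set v | forall l, v ord0 l \in `[a ord0 l - r, a ord0 l + r]].

Lemma box_compact a r : compact (box a r).
Proof.
apply: (@rV_compact _ _ (fun l => `[a ord0 l - r, a ord0 l + r]%classic)) => l.
exact: segment_compact.
Qed.

Lemma boxP a r y : box a r y <-> forall l, `|a ord0 l - y ord0 l| <= r.
Proof. by split=> ay l; move: (ay l); rewrite in_itv /= ler_distlC. Qed.

Lemma rect_box a r b x : box a r b -> box a r x -> rect b x `<=` box a r.
Proof.
move=> ab ax v bxv l; move: (ab l) (ax l) (bxv l); rewrite !in_itv /= /Num.min /Num.max.
by case: ltP => ? /andP[? ?] /andP[? ?] /andP[? ?]; apply/andP; split; lra.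
Qed.

Lemma ball_rowP a y (e : R) : 0 < e ->
  ball a e y <-> forall l, `|a ord0 l - y ord0 l| < e.
Proof.
move=> e0; rewrite mx_norm_ball /ball_ /= /Num.norm /= mx_normrE; split => [ay l|ay].
  apply: le_lt_trans ay.
  have := @le_bigmax _ _ _ 0 (fun ij : 'I_1 * 'I_n => `|(a - y) ij.1 ij.2|) (ord0, l).
  by rewrite !mxE.
by apply/bigmax_ltP; split => // -[i l] _ /=; rewrite !mxE (ord1 i) ay.
Qed.

Lemma coord_le_enorm v (l : 'I_n) : `|v ord0 l| <= enorm v.
Proof.
rewrite /enorm -sqrtr_sqr; apply: ler_wsqrtr.
by rewrite (bigD1 l) //= lerDl; apply: sumr_ge0 => i _; exact: sqr_ge0.
Qed.

Lemma enorm_le v (c : R) : 0 <= c -> (forall l, `|v ord0 l| <= c) -> enorm v <= n%:R * c.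
Proof.
move=> c0 vc; have n0 : (0 : R) <= n%:R by rewrite ler0n.
rewrite /enorm -(ger0_norm (mulr_ge0 n0 c0)) -sqrtr_sqr; apply: ler_wsqrtr.
apply: (@le_trans _ _ (\sum_(l < n) c ^+ 2)).
  apply: ler_sum => l _; rewrite -real_normK ?num_real //.
  by apply: lerXn2r; rewrite ?nnegrE ?normr_ge0.
rewrite sumr_const card_ord exprMn -[_ *+ n]mulr_natl; apply: ler_wpM2r; first exact: sqr_ge0.
by case: n {v vc n0} => [|m]; rewrite ?expr0n // -natrX ler_nat expnS leq_pmulr.
Qed.

Lemma dist_set_le x X y : X y -> dist_set x X <= enorm (x - y).
Proof.
move=> Xy; apply: ge_inf; last by exists y.
by exists 0 => _ [z _ <-]; exact: sqrtr_ge0.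
Qed.

Lemma dist_set_ge0 x X : 0 <= dist_set x X.
Proof.
have [->|/set0P[y Xy]] := eqVneq X set0; first by rewrite /dist_set image_set0 inf0.
apply: lb_le_inf; first by exists (enorm (x - y)), y.
by move=> _ [z _ <-]; exact: sqrtr_ge0.
Qed.

Lemma dist_set_lt_twice x X : 0 < dist_set x X ->
  exists2 y, X y & enorm (x - y) < 2 * dist_set x X.
Proof.
move=> d0; have [X0|/set0P[y Xy]] := eqVneq X set0.
  by move: d0; rewrite /dist_set X0 image_set0 inf0 ltxx.
have hasinf : has_inf [set enorm (x - y) | y in X].
  split; first by exists (enorm (x - y)), y.
  by exists 0 => _ [z _ <-]; exact: sqrtr_ge0.
have [_ [z Xz <-] ltz] := inf_adherent d0 hasinf.
by exists z; rewrite // mulr2n mulrDl mul1r.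
Qed.

End Geometry.

Section AssociatedFunction.
Variables (R : realType) (M : nat -> R).
Hypothesis M_ge1 : forall j, 1 <= M j.

Let M_ge0 j : 0 <= M j. Proof. exact: le_trans ler01 (M_ge1 j). Qed.

Lemma hM_le (t : R) (j : nat) : 0 < t -> hM M t <= t ^+ j * M j.
Proof.
move=> t0; rewrite /hM gt_eqF //; apply: ge_inf; last by exists j.
by exists 0 => _ [i _ <-]; rewrite mulr_ge0 ?M_ge0 // exprn_ge0 // ltW.
Qed.

Lemma hM_ge (t c : R) : 0 < t -> (forall j, c <= t ^+ j * M j) -> c <= hM M t.
Proof.
move=> t0 ct; rewrite /hM gt_eqF //; apply: lb_le_inf; first by exists (t ^+ 0 * M 0%N), 0%N.
by move=> _ [j _ <-].
Qed.

Lemma hM_ge0 (t : R) : 0 <= t -> 0 <= hM M t.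
Proof.
rewrite le_eqVlt => /predU1P[<-|t0]; first by rewrite /hM eqxx.
by apply: hM_ge => // j; rewrite mulr_ge0 ?M_ge0 // exprn_ge0 // ltW.
Qed.

(* For [j < N] the bound [hM M s <= s ^+ N * M N] suffices, since [s <= 1];
   for [j >= N] the factor [2 ^+ j] already beats [2 ^+ N]. *)
Lemma hM_double (N : nat) (s : R) :
  0 < s -> 2 ^+ N * s * M N <= 1 -> 2 ^+ N * hM M s <= hM M (2 * s).
Proof.
move=> s0 sN; have twoN : 1 <= 2 ^+ N :> R by rewrite exprn_ege1 // ler1n.
have s1 : s <= 1.
  apply: le_trans sN; rewrite mulrAC -[leLHS]mul1r.
  by apply: ler_wpM2r; [exact: ltW | exact: mulr_ege1].
apply: hM_ge; first by rewrite mulr_gt0.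
move=> j; rewrite exprMn -mulrA; have [Nj|jN] := leqP N j.
  apply: ler_pM; [exact: exprn_ge0 | exact: hM_ge0 (ltW s0) | | exact: hM_le].
  by apply: ler_weXn2l; rewrite // ler1n.
have sj_le : s ^+ j <= 2 ^+ j * (s ^+ j * M j).
  have sj0 : 0 <= s ^+ j by rewrite exprn_ge0 // ltW.
  rewrite -[leLHS]mul1r ler_pM // ?exprn_ege1 ?ler1n //.
  by rewrite -[leLHS]mulr1 ler_pM.
apply: le_trans sj_le; case: N jN sN {twoN} => // N jN sN.
apply: (le_trans (ler_wpM2l (exprn_ge0 _ (ler0n _ 2)) (hM_le N.+1 s0))).
have -> : 2 ^+ N.+1 * (s ^+ N.+1 * M N.+1) = 2 ^+ N.+1 * s * M N.+1 * s ^+ N.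
  by rewrite [s ^+ N.+1]exprSr; move: (2 ^+ N.+1 : R) (M N.+1) (s ^+ N) => A B P; ring.
apply: le_trans (ler_wpM2r (exprn_ge0 _ (ltW s0)) sN) _.
by rewrite mul1r ler_wiXn2l //; exact: ltW.
Qed.

Lemma hM_dominates (c : R) : exists2 eps : R, 0 < eps &
  forall s, 0 < s <= eps -> 0 < hM M (2 * s) -> c * hM M s < hM M (2 * s).
Proof.
pose N := Num.Def.archi_bound `|c|.
have c2N : c < 2 ^+ N.
  apply: le_lt_trans (ler_norm c) (lt_le_trans (archi_boundP (normr_ge0 c)) _).
  by rewrite -natrX ler_nat ltnW // ltn_expl.
have MN0 : 0 < 2 ^+ N * M N by rewrite mulr_gt0 ?exprn_gt0 // (lt_le_trans ltr01).
exists (2 ^+ N * M N)^-1; first by rewrite invr_gt0.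
move=> s /andP[s0 seps] h2s; have hMs : 2 ^+ N * hM M s <= hM M (2 * s).
  apply: hM_double => //; rewrite mulrAC.
  by have := ler_wpM2l (ltW MN0) seps; rewrite mulfV ?gt_eqF.
have [->|hMs0] := eqVneq (hM M s) 0; first by rewrite mulr0.
have hMs_gt0 : 0 < hM M s by rewrite lt_def hMs0 hM_ge0 ?ltW.
by apply: lt_le_trans hMs; rewrite ltr_pM2r.
Qed.

End AssociatedFunction.

Lemma inv_norm_le_div (R : realFieldType) (u c h : R) : u != 0 -> 0 <= h ->
  `|u^-1| <= c / h -> 0 < h /\ h <= c * `|u|.
Proof.
move=> u0 h0 uch; have u_gt0 : 0 < `|u| by rewrite normr_gt0.
have h_gt0 : 0 < h.
  rewrite lt_def h0 andbT; apply: contraTneq uch => ->.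
  by rewrite invr0 mulr0 -ltNge normrV ?unitfE // invr_gt0.
split=> //; rewrite normrV ?unitfE // ler_pdivlMr // in uch.
by rewrite -ler_pdivrMr // mulrC.
Qed.

Section FlatZeros.
Variables (R : realType) (n : nat) (M : nat -> R) (Omega : set 'rV[R]_n) (phi : 'rV[R]_n -> R).
Hypothesis M_ge1 : forall j, 1 <= M j.
Local Notation X := (zero_set Omega phi).

Lemma flat_points_DJ (b : 'rV[R]_n) (J : mindex n) :
  flat_points Omega phi b -> DJ J phi b = 0.
Proof.
move=> [_ /(congr1 (fun f => f J)) /eqP]; rewrite mulf_eq0 invr_eq0 pnatr_eq0.
case/orP=> /eqP // mfact0; suff : (0 < mfact J)%N by rewrite mfact0.
by rewrite prodn_gt0 // => i; exact: fact_gt0.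
Qed.

Lemma flat_hM_bound (K : set 'rV[R]_n) (C sig D : R) (b x : 'rV[R]_n) :
  smooth_on Omega phi -> K `<=` Omega -> 0 < C -> 0 < sig -> 0 < D ->
  (forall (J : mindex n) y, K y ->
     `|DJ J phi y| <= C * sig ^+ mdeg J * (mdeg J)`!%:R * M (mdeg J)) ->
  flat_points Omega phi b -> rect b x `<=` K -> (forall l, `|x ord0 l - b ord0 l| <= D) ->
  `|phi x| <= C * hM M (sig * n.+1%:R * D).
Proof.
move=> phi_smooth KO C0 sig0 D0 DJ_bound /flat_points_DJ flat_b rectK xbD.
rewrite -ler_pdivrMl //; apply: hM_ge => [|k]; first by rewrite !mulr_gt0.
have fk : (0 : R) < k`!%:R by rewrite ltr0n fact_gt0.
have Mk0 : 0 < M k by rewrite (lt_le_trans ltr01 (M_ge1 k)).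
have Ck0 : 0 <= C * sig ^+ k * k`!%:R * M k.
  by rewrite !mulr_ge0 ?ler0n ?exprn_ge0 ?(ltW C0) ?(ltW sig0) ?(ltW Mk0).
have DJk_bound (J : mindex n) y : K y -> mdeg J = k ->
    `|DJ J phi y| <= C * sig ^+ k * k`!%:R * M k.
  by move=> Ky <-; exact: DJ_bound.
rewrite ler_pdivrMl //; apply: le_trans
  (flat_taylor_bound phi_smooth KO rectK Ck0 (ltW D0) DJk_bound flat_b xbD) _.
have -> : C * sig ^+ k * k`!%:R * M k * (n%:R * D) ^+ k / k`!%:R =
    C * (sig ^+ k * n%:R ^+ k * D ^+ k * M k).
  by rewrite exprMn; field; rewrite gt_eqF.
rewrite !exprMn ler_pM2l // ler_pM2r // ler_pM2r ?exprn_gt0 // ler_pM2l ?exprn_gt0 //.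
by rewrite lerXn2r ?nnegrE ?ler0n // ler_nat.
Qed.

Lemma lojasiewicz_hM_bound (K : set 'rV[R]_n) (lam : R) :
  CM_lojasiewicz M Omega phi -> compact K -> K `<=` Omega -> 0 < lam ->
  exists2 C : R, 0 < C & forall x, K x -> phi x != 0 ->
    0 < hM M (lam * dist_set x X) /\ hM M (lam * dist_set x X) <= C * `|phi x|.
Proof.
move=> phi_loj cK KO lam0; have [C [sig [C0 _ loj]]] := phi_loj K cK KO lam lam0.
exists (C * M 0%N) => [|x Kx phix]; first by rewrite mulr_gt0 // (lt_le_trans ltr01).
apply: inv_norm_le_div; first by [].
  by rewrite hM_ge0 // mulr_ge0 ?dist_set_ge0 ?ltW.
have nXx : ~ X x by case=> _ /eqP; exact/negP.
have := loj (fun _ => 0%N) x Kx nXx.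
by rewrite DJ0 mdeg0 expr0 mulr1 fact0 mulr1.
Qed.

Lemma flat_zero_dist_bound (a x : 'rV[R]_n) (r C sig : R) :
  smooth_on Omega phi -> box a r `<=` Omega -> 0 < C -> 0 < sig ->
  (forall (J : mindex n) y, box a r y ->
     `|DJ J phi y| <= C * sig ^+ mdeg J * (mdeg J)`!%:R * M (mdeg J)) ->
  (forall y, X y -> box a r y -> flat_points Omega phi y) ->
  0 < dist_set x X -> (forall l, `|a ord0 l - x ord0 l| + 2 * dist_set x X <= r) ->
  `|phi x| <= C * hM M (sig * n.+1%:R * (2 * dist_set x X)).
Proof.
move=> phi_smooth boxO C0 sig0 DJ_bound flat_box d0 ax.
have [b Xb xb] := dist_set_lt_twice d0.
have xbD l : `|x ord0 l - b ord0 l| <= 2 * dist_set x X.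
  by have := coord_le_enorm (x - b) l; rewrite !mxE => /le_trans; apply; rewrite ltW.
have box_x : box a r x by apply/boxP => l; have := ax l; lra.
have box_b : box a r b.
  apply/boxP => l; have := ler_distD (x ord0 l) (a ord0 l) (b ord0 l).
  have := ax l; have := xbD l; lra.
apply: (flat_hM_bound phi_smooth boxO C0 sig0 _ DJ_bound (flat_box b Xb box_b)
  (rect_box box_b box_x) xbD).
exact: mulr_gt0.
Qed.

Lemma nonflat_zero_in_box (a : 'rV[R]_n) (r : R) :
  CM M Omega phi -> CM_lojasiewicz M Omega phi -> 0 < r -> box a r `<=` Omega ->
  closure X a -> closure (Omega `\` X) a ->
  exists2 y, box a r y & (X `\` flat_points Omega phi) y.
Proof.
move=> [phi_smooth phi_bound] phi_loj r0 boxO clX clC; apply: contrapT => no_nonflat.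
have flat_box y : X y -> box a r y -> flat_points Omega phi y.
  by move=> Xy ay; apply: contrapT => nfy; apply: no_nonflat; exists y.
have box_cpt : compact (box a r) := @box_compact _ _ a r.
have [C [sig [C0 sig0 DJ_bound]]] := phi_bound _ box_cpt boxO.
pose lam := 4 * sig * n.+1%:R.
have lam0 : 0 < lam by rewrite !mulr_gt0 ?ltr0n.
have [C2 C20 loj] := lojasiewicz_hM_bound phi_loj box_cpt boxO lam0.
have [eps eps0 dominates] := hM_dominates M_ge1 (C * C2).
have n0 : (0 : R) <= n%:R by rewrite ler0n.
pose del := Num.min (r / (4 * n%:R + 1)) (eps / (4 * sig * n.+1%:R ^+ 2)).
have del0 : 0 < del by rewrite lt_min !divr_gt0 ?mulr_gt0 ?exprn_gt0 ?ltr0n //; lra.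
have delr : del * (4 * n%:R + 1) <= r by rewrite -ler_pdivlMr ?ge_min ?lexx //; lra.
have deleps : 4 * sig * n.+1%:R ^+ 2 * del <= eps.
  by rewrite mulrC -ler_pdivlMr ?ge_min ?lexx ?orbT // !mulr_gt0 ?exprn_gt0 ?ltr0n.
have [x [[Ox nXx] /(ball_rowP _ _ del0) ax]] := clC _ (nbhsx_ballx a del del0).
have [z [Xz /(ball_rowP _ _ del0) az]] := clX _ (nbhsx_ballx a del del0).
have phix : phi x != 0 by apply/eqP => phix0; apply: nXx.
have box_x : box a r x by apply/boxP => l; have := ax l; nra.
set d := dist_set x X.
have d_le : d <= n%:R * (2 * del).
  apply: le_trans (dist_set_le _ Xz) (enorm_le _ _) => [|l]; first by rewrite mulr_ge0 ?ltW.
  by move: (ax l) (az l); rewrite !mxE !ltr_distlC ler_distlC => /andP[? ?] /andP[? ?]; lra.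
pose s := sig * n.+1%:R * (2 * d).
have [h2s_gt0 h2s_le] : 0 < hM M (2 * s) /\ hM M (2 * s) <= C2 * `|phi x|.
  by have := loj x box_x phix; rewrite (_ : lam * d = 2 * s) // /s /lam; ring.
have d0 : 0 < d.
  rewrite lt_def dist_set_ge0 andbT; apply: contraTneq h2s_gt0 => d0.
  by rewrite /s d0 !mulr0 /hM eqxx ltxx.
have phix_le : `|phi x| <= C * hM M s.
  apply: (flat_zero_dist_bound phi_smooth boxO C0 sig0 DJ_bound flat_box d0) => l.
  by have := ax l; nra.
have s_eps : 0 < s <= eps.
  rewrite !mulr_gt0 ?ltr0n //=; apply: le_trans deleps.
  have n1 : n%:R <= n.+1%:R :> R by rewrite ler_nat.
  have d_le' : 2 * d <= n.+1%:R * (4 * del) by nra.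
  apply: le_trans (ler_wpM2l _ d_le') _; first by rewrite mulr_ge0 ?ler0n ?ltW.
  by rewrite le_eqVlt; apply/orP; left; apply/eqP; ring.
have := dominates s s_eps h2s_gt0.
have := ler_wpM2l (ltW C20) phix_le; lra.
Qed.

End FlatZeros.

Theorem lemma3p3 (R : realType) (n : nat) (M : nat -> R)
    (Omega : set 'rV[R]_n) (phi : 'rV[R]_n -> R) :
  strongly_regular M ->
  open Omega ->
  CM M Omega phi ->
  (exists2 x, Omega x & phi x != 0) ->
  CM_lojasiewicz M Omega phi ->
  rel_boundary Omega (zero_set Omega phi)
    `<=` closure (zero_set Omega phi `\` flat_points Omega phi).
Proof.
move=> [[M_incr M0] _ _ _] Omega_open phi_CM _ phi_loj a [[Oa clX] clC] B aB.
have M_ge1 j : 1 <= M j by elim: j => [|j IH]; rewrite ?M0 // (le_trans IH).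
have /nbhs_ballP[e e0 eBO] : nbhs a (B `&` Omega).
  by apply: filterI aB _; move: Omega_open; rewrite openE => /(_ a Oa).
have e20 : 0 < e / 2 by rewrite divr_gt0.
have boxB : box a (e / 2) `<=` B `&` Omega.
  move=> v /boxP av; apply/eBO/(ball_rowP _ _ e0) => l.
  by apply: le_lt_trans (av l) _; rewrite ltr_pdivrMr // ltr_pMr // ltr1n.
have [y /boxB[By _] Xy] := nonflat_zero_in_box M_ge1 phi_CM phi_loj e20
  (fun v av => (boxB v av).2) clX clC.
by exists y.
Qed.
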